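(* Fix $i\in\{1,\dots,k\}$ and $\hat z\in[2^n]$, and let $m_1,m_2\in\mathcal{M}^{\text{good}}$ satisfy $z'_i(m_1)=z'_i(m_2)=\hat z$ and $b_i(m_1)\ne b_i(m_2)$. Then there exists an element of $\mathcal{B}^{\text{err}}$ that the decoder of terminal $t$ maps to $m_1$ or to $m_2$.
   Context: Setting. $\mathcal{N}$ is a directed network containing nodes $s_1,\dots,s_k,t_1,\dots,t_k$. The network $\mathcal{G}$ is obtained from $\mathcal{N}$ by adding new nodes $s,t,A_1,\dots,A_k,B_1,\dots,B_k$ and, for each $i$, the unit-capacity edges $a_i=(s,A_i)$, two parallel edges $x_i,y_i$ from $A_i$ to $B_i$, $z_i=(A_i,s_i)$, $z'_i=(t_i,B_i)$, and $b_i=(B_i,t)$; the incoming edges of $t$ are exactly $b_1,\dots,b_k$. Admissible error patterns $\boldsymbol r=(r_e)$ are those in which at most one edge $e$ has $r_e\neq0$, with $e\notin\{a_1,\dots,a_k,b_1,\dots,b_k\}$. The output of an edge is its input XOR $r_e$. Let $\mathcal{C}$ be a length-$n$ network code on $\mathcal{G}$. The source $s$ has message $m\in[2^{kn}]$, where $[N]=\{1,\dots,N\}$. An edge $e=(u,v)$ of capacity $c_e$ carries a value in $[2^{nc_e}]$ computed from the signals on the incoming edges of $u$ (and from $m$ if $u=s$). The terminal $t$ has a decoder mapping each tuple in $[2^n]^k$ received on $(b_1,\dots,b_k)$ to a message. For an edge $e$, let $e(m,\boldsymbol r)$ be the signal received on $e$ under message $m$ and error pattern $\boldsymbol r$, and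 let $e(m)=e(m,\boldsymbol 0)$. Write $\boldsymbol b(m)=(b_1(m),\dots,b_k(m))$. Let $\mathcal{M}^{\text{good}}$ be the set of messages $m$ such that $t$ decodes to $m$ under every admissible error pattern when $m$ is sent. Let $\mathcal{B}^{\text{good}}=\{\boldsymbol b(m):m\in\mathcal{M}^{\text{good}}\}$ and $\mathcal{B}^{\text{err}}=[2^n]^k\setminus\mathcal{B}^{\text{good}}$. *)

From mathcomp Require Import all_boot.
Set Implicit Arguments. Unset Strict Implicit. Unset Printing Implicit Defensive.

Inductive gnode (VN : Type) (k : nat) : Type :=
  | NOld of VN | Ns | Nt | NA of 'I_k | NB of 'I_k.

Inductive gedge (EN : Type) (k : nat) : Type :=
  | EOld of EN | Ea of 'I_k | Ex of 'I_k | Ey of 'I_k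
  | Ez of 'I_k | Ez' of 'I_k | Eb of 'I_k.

Arguments Ns {VN k}. Arguments Nt {VN k}.
Arguments NOld {VN k}. Arguments NA {VN k}. Arguments NB {VN k}.
Arguments EOld {EN k}. Arguments Ea {EN k}. Arguments Ex {EN k}.
Arguments Ey {EN k}. Arguments Ez {EN k}. Arguments Ez' {EN k}.
Arguments Eb {EN k}.

Section G.
Variables (VN EN : Type) (k : nat).
Variables (tailN headN : EN -> VN) (capN : EN -> nat) (sN tN : 'I_k -> VN).

Definition tailG (e : gedge EN k) : gnode VN k :=
  match e with
  | EOld e0 => NOld (tailN e0)
  | Ea _ => Ns
  | Ex i | Ey i | Ez i => NA i
  | Ez' i => NOld (tN i)
  | Eb i => NB i
  end.

Definition headG (e : gedge EN k) : gnode VN k :=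
  match e with
  | EOld e0 => NOld (headN e0)
  | Ea i => NA i
  | Ex i | Ey i | Ez' i => NB i
  | Ez i => NOld (sN i)
  | Eb _ => Nt
  end.

Definition capG (e : gedge EN k) : nat :=
  match e with EOld e0 => capN e0 | _ => 1 end.

Definition acyclicN : Prop :=
  exists rank : VN -> nat, forall e, rank (tailN e) < rank (headN e).

Variable n : nat.

(* messages m in [2^(kn)], represented 0-based as 'I_(2^(k n)) *)
Definition msg := 'I_(2 ^ (k * n)).

(* A length-n network code on G: edge e carries a value in [2^(n c_e)]
   (0-based: a nat < 2^(n c_e)) computed from the signals on the incoming
   edges of its tail u (and from m if u = s). *)
Definition is_code (enc : gedge EN k -> msg -> (gedge EN k -> nat) -> nat) : Prop :=
  [/\ forall e m sg, enc e m sg < 2 ^ (n * capG e),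
      forall e m1 m2 sg, tailG e <> Ns -> enc e m1 sg = enc e m2 sg
    & forall e m sg1 sg2,
        (forall e', headG e' = tailG e -> sg1 e' = sg2 e') ->
        enc e m sg1 = enc e m sg2].

Definition admissible (r : gedge EN k -> nat) : Prop :=
  [/\ forall e, r e < 2 ^ (n * capG e),
      forall e e', r e <> 0 -> r e' <> 0 -> e = e'
    & forall i, r (Ea i) = 0 /\ r (Eb i) = 0].

Definition no_err : gedge EN k -> nat := fun _ => 0.

(* sig m r e = e(m, r): the output of each edge is its (encoded) input XOR r_e.
   (G is acyclic, so these equations determine the signals uniquely.) *)
Definition is_signal (enc : gedge EN k -> msg -> (gedge EN k -> nat) -> nat)
    (sig : msg -> (gedge EN k -> nat) -> gedge EN k -> nat) : Prop :=
  forall m r, admissible r ->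
    forall e, sig m r e = Nat.lxor (enc e m (sig m r)) (r e).

Variables (sig : msg -> (gedge EN k -> nat) -> gedge EN k -> nat)
          (dec : {ffun 'I_k -> nat} -> msg).

Definition bvec (m : msg) (r : gedge EN k -> nat) : {ffun 'I_k -> nat} :=
  [ffun j => sig m r (Eb j)].

Definition Mgood (m : msg) : Prop :=
  forall r, admissible r -> dec (bvec m r) = m.

Definition Bgood (beta : {ffun 'I_k -> nat}) : Prop :=
  exists m, Mgood m /\ bvec m no_err = beta.

Definition Berr (beta : {ffun 'I_k -> nat}) : Prop :=
  (forall j, beta j < 2 ^ n) /\ ~ Bgood beta.

End G.

(* Under m1, corrupt x_i so that it carries x_i(m2); under m2, corrupt y_i so
   that it carries y_i(m1).  In both scenarios B_i then sees the same inputs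
   (x_i(m2), y_i(m1), zhat), and its encoder ignores the message, so b_i carries
   the same value.  Since b_i(m1) <> b_i(m2), in one scenario b_i differs from
   its error-free value.  The corrupted tuple received there still decodes to
   the (good) message sent, yet it is not in B^good: a good m' with
   b(m') equal to it would decode to both m' and the sent message, making the
   corrupted tuple equal to the error-free one. *)

From HB Require Import structures.
From Stdlib Require Import PeanoNat Lia.
From mathcomp Require Import all_boot zify.

Lemma lxor_lt_pow2 a b p : a < 2 ^ p -> b < 2 ^ p -> Nat.lxor a b < 2 ^ p.
Proof.
have pow2E : 2 ^ p = Nat.pow 2 p by elim: p => //= p IH; rewrite expnS IH.
rewrite pow2E => /ltP ha /ltP hb; apply/ltP.
have [-> | a0] := Nat.eq_dec a 0; first by rewrite Nat.lxor_0_l.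
have [-> | b0] := Nat.eq_dec b 0; first by rewrite Nat.lxor_0_r.
have [-> | c0] := Nat.eq_dec (Nat.lxor a b) 0; first by have := Nat.pow_nonzero 2 p; lia.
apply: (proj2 (Nat.log2_lt_pow2 _ _ _)); first by lia.
move: ha hb => /(Nat.log2_lt_pow2 _ _ _) ha /(Nat.log2_lt_pow2 _ _ _) hb.
have := Nat.log2_lxor a b; have := ha ltac:(lia); have := hb ltac:(lia); lia.
Qed.

Lemma lxor_cancel_l a b : Nat.lxor a (Nat.lxor a b) = b.
Proof. by rewrite -Nat.lxor_assoc Nat.lxor_nilpotent Nat.lxor_0_l. Qed.

Lemma lxor_cancel_r a b : Nat.lxor b (Nat.lxor a b) = a.
Proof. by rewrite Nat.lxor_comm Nat.lxor_assoc Nat.lxor_nilpotent Nat.lxor_0_r. Qed.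

Definition gedge_code (EN : Type) (k : nat) (e : gedge EN k) : EN + nat * 'I_k :=
  match e with
  | EOld e0 => inl e0
  | Ea i => inr (0, i) | Ex i => inr (1, i) | Ey i => inr (2, i)
  | Ez i => inr (3, i) | Ez' i => inr (4, i) | Eb i => inr (5, i)
  end.

Definition gedge_decode (EN : Type) (k : nat) (c : EN + nat * 'I_k) :
    option (gedge EN k) :=
  match c with
  | inl e0 => Some (EOld e0)
  | inr (0, i) => Some (Ea i) | inr (1, i) => Some (Ex i)
  | inr (2, i) => Some (Ey i) | inr (3, i) => Some (Ez i)
  | inr (4, i) => Some (Ez' i) | inr (5, i) => Some (Eb i)
  | inr _ => None
  end.

Lemma gedge_codeK (EN : Type) (k : nat) :
  pcancel (@gedge_code EN k) (@gedge_decode EN k).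
Proof. by case. Qed.

HB.instance Definition _ (EN : eqType) (k : nat) :=
  Equality.copy (gedge EN k) (pcan_type (@gedge_codeK EN k)).

Section ExtendedNetwork.

Context {VN : Type} {EN : eqType} {k : nat}.
Context {tailN headN : EN -> VN} {capN : EN -> nat} {sN tN : 'I_k -> VN}.

Local Notation edge := (gedge EN k).
Local Notation tail := (tailG tailN tN).
Local Notation head := (headG headN sN).

Lemma acyclicG : acyclicN tailN headN ->
  exists rank : gnode VN k -> nat, forall e, rank (tail e) < rank (head e).
Proof.
case=> rk hrk; pose M := (\max_(j < k) rk (tN j)) + 3.
exists (fun x => match x with
                 | Ns => 0 | NA _ => 1 | NOld v => rk v + 2 | NB _ => M | Nt => M.+1
                 end).
case=> [e|j|j|j|j|j|j] //=; try lia; first by rewrite ltn_add2r.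
by rewrite /M (addnS _ 2) ltnS leq_add2r; apply: (@leq_bigmax _ (fun j => rk (tN j))).
Qed.

Lemma tailG_neq_Nt (e : edge) : tail e <> Nt.
Proof. by case: e. Qed.

Lemma tailG_eq_NB (e : edge) i : tail e = NB i -> e = Eb i.
Proof. by case: e => //= j [->]. Qed.

Context {n : nat}.

Local Notation admissible := (admissible capN n).
Local Notation no_err := (@no_err EN k).

Lemma admissible_no_err : admissible no_err.
Proof. by split=> // e; rewrite /no_err expn_gt0. Qed.

Definition single_err (e0 : edge) (v : nat) (e : edge) : nat :=
  if e == e0 then v else 0.

Lemma admissible_single_err e0 v :
  v < 2 ^ (n * capG capN e0) -> (forall j, e0 <> Ea j /\ e0 <> Eb j) ->
  admissible (single_err e0 v).
Proof.
move=> hv he0; rewrite /single_err; split.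
- by move=> e; case: eqP => [->|_]; rewrite ?expn_gt0.
- by move=> e e'; do 2 case: eqP => [->|_] //.
- by move=> j; have [ha hb] := he0 j; split; case: eqP => // E; [case: ha | case: hb].
Qed.

Context {enc : edge -> msg k n -> (edge -> nat) -> nat}
        {sig : msg k n -> (edge -> nat) -> edge -> nat}
        {dec : {ffun 'I_k -> nat} -> msg k n}.
Hypotheses (hcode : is_code tailN headN capN sN tN (n:=n) enc)
           (hsig : is_signal capN (n:=n) enc sig)
           (hacyc : acyclicN tailN headN).

Lemma signal_lt m r e : admissible r -> sig m r e < 2 ^ (n * capG capN e).
Proof.
move=> hr; rewrite hsig //; case: hcode => henc _ _; case: hr => hr _ _.
exact: lxor_lt_pow2.
Qed.

Lemma signal_eq_of_inputs m1 m2 r1 r2 e :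
  admissible r1 -> admissible r2 -> tail e <> Ns -> r1 e = r2 e ->
  (forall e', head e' = tail e -> sig m1 r1 e' = sig m2 r2 e') ->
  sig m1 r1 e = sig m2 r2 e.
Proof.
move=> hr1 hr2 hs hre hin; rewrite (hsig _ _ hr1) (hsig _ _ hr2) hre.
case: hcode => _ hsrc hloc; rewrite (hsrc e m1 m2) //.
by congr Nat.lxor; apply: hloc.
Qed.

(* The only edge leaving B_i is b_i, so an error on an edge entering B_i
   perturbs no other edge. *)
Lemma signal_single_err m e0 v i e :
  admissible (single_err e0 v) -> head e0 = NB i -> e <> Eb i ->
  sig m (single_err e0 v) e = Nat.lxor (sig m no_err e) (single_err e0 v e).
Proof.
move=> hr he0; have [rank hrank] := acyclicG hacyc.
elim: {e}(rank (tail e)).+1 {-2}e (ltnSn (rank (tail e))) => // N IH e he hne.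
rewrite (hsig _ _ hr) (hsig _ _ admissible_no_err) /no_err Nat.lxor_0_r.
congr Nat.lxor; case: hcode => _ _ hloc; apply: hloc => e' he'.
have he'b : e' <> Eb i by move=> E; apply: (@tailG_neq_Nt e); rewrite -he' E.
rewrite IH //; last by have := hrank e'; rewrite he'; lia.
rewrite /single_err; case: eqP => [E|_]; last by rewrite Nat.lxor_0_r.
by case: hne; apply: tailG_eq_NB; rewrite -he' E.
Qed.

Lemma confusable_at_B i m1 m2 :
  sig m1 no_err (Ez' i) = sig m2 no_err (Ez' i) ->
  exists r1 r2, [/\ admissible r1, admissible r2 &
                    sig m1 r1 (Eb i) = sig m2 r2 (Eb i)].
Proof.
move=> hz.
set x1 := sig m1 no_err (Ex i); set x2 := sig m2 no_err (Ex i).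
set y1 := sig m1 no_err (Ey i); set y2 := sig m2 no_err (Ey i).
have bound m e : sig m no_err e < 2 ^ (n * capG capN e).
  exact: signal_lt admissible_no_err.
have hr1 : admissible (single_err (Ex i) (Nat.lxor x1 x2)).
  by apply: admissible_single_err => //; apply: lxor_lt_pow2; apply: bound.
have hr2 : admissible (single_err (Ey i) (Nat.lxor y1 y2)).
  by apply: admissible_single_err => //; apply: lxor_lt_pow2; apply: bound.
exists (single_err (Ex i) (Nat.lxor x1 x2)), (single_err (Ey i) (Nat.lxor y1 y2)).
split=> //; apply: signal_eq_of_inputs => // e' he'.
have hne : e' <> Eb i by move=> E; rewrite E in he'.
rewrite (@signal_single_err m1 _ _ i e' hr1 erefl hne).
rewrite (@signal_single_err m2 _ _ i e' hr2 erefl hne).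
rewrite /single_err.
case: e' he' {hne} => //= j [->]; rewrite ?eqxx /=.
- by rewrite lxor_cancel_l Nat.lxor_0_r.
- by rewrite lxor_cancel_r Nat.lxor_0_r.
- by rewrite !Nat.lxor_0_r.
Qed.

Lemma corrupted_Berr m r j :
  Mgood capN sig dec m -> admissible r -> sig m r (Eb j) <> sig m no_err (Eb j) ->
  Berr capN sig dec (bvec sig m r) /\ dec (bvec sig m r) = m.
Proof.
move=> hm hr hne; have hdec : dec (bvec sig m r) = m by apply: hm.
split=> //; split.
  by move=> j'; rewrite ffunE; have := @signal_lt m r (Eb j') hr; rewrite muln1.
case=> m' [hm' hb]; apply: hne.
have em : m' = m by rewrite -(hm' _ admissible_no_err) hb hdec.
subst m'; have := congr1 (fun f : {ffun _ -> _} => f j) hb.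
by rewrite !ffunE.
Qed.

End ExtendedNetwork.

Theorem lemma2 (VN EN : finType) (k : nat)
    (tailN headN : EN -> VN) (capN : EN -> nat) (sN tN : 'I_k -> VN) (n : nat)
    (enc : gedge EN k -> msg k n -> (gedge EN k -> nat) -> nat)
    (sig : msg k n -> (gedge EN k -> nat) -> gedge EN k -> nat)
    (dec : {ffun 'I_k -> nat} -> msg k n)
    (hacyc : acyclicN tailN headN)
    (hcode : is_code tailN headN capN sN tN (n:=n) enc)
    (hsig : is_signal capN (n:=n) enc sig)
    (i : 'I_k) (zhat : nat) (hz : zhat < 2 ^ n) (m1 m2 : msg k n)
    (hm1 : Mgood capN (n:=n) sig dec m1) (hm2 : Mgood capN (n:=n) sig dec m2)
    (hz1 : sig m1 (@no_err EN k) (Ez' i) = zhat)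
    (hz2 : sig m2 (@no_err EN k) (Ez' i) = zhat)
    (hb : sig m1 (@no_err EN k) (Eb i) <> sig m2 (@no_err EN k) (Eb i)) :
  exists beta, Berr capN (n:=n) sig dec beta /\ (dec beta = m1 \/ dec beta = m2).
Proof.
have [r1 [r2 [hr1 hr2 hsame]]] :=
  confusable_at_B hcode hsig hacyc i m1 m2 (etrans hz1 (esym hz2)).
have [e1 | ne1] := eqVneq (sig m1 r1 (Eb i)) (sig m1 (@no_err EN k) (Eb i)).
- have ne2 : sig m2 r2 (Eb i) <> sig m2 (@no_err EN k) (Eb i) by rewrite -hsame e1.
  have [hB hd] := corrupted_Berr hcode hsig m2 r2 i hm2 hr2 ne2.
  by exists (bvec sig m2 r2); auto.
- have [hB hd] := corrupted_Berr hcode hsig m1 r1 i hm1 hr1 (elimN eqP ne1).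
  by exists (bvec sig m1 r1); auto.
Qed.
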